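(* Let $n\ge p$, $\Psi\in\mathbb R^{n\times p}$ with $\|\Psi\|_2<1$, and set $\epsilon_0=\tfrac12(1-\|\Psi\|_2)$. There is a constant $K_{n,p,\epsilon_0}>0$ depending only on $n,p,\epsilon_0$ such that for every $p\times p$ diagonal matrix $D$ with positive diagonal entries, every $M\in\mathcal V_{n,p}$ and every $V\in\mathcal V_{p,p}$, $$\frac{\mathrm{etr}(VDM^T\Psi)}{{}_0F_1\!\left(\tfrac n2,\tfrac{D^2}{4}\right)}<\frac{\mathrm{etr}(-\epsilon_0 D)}{K_{n,p,\epsilon_0}}.$$
   Context: $\mathcal V_{n,p}=\{X\in\mathbb R^{n\times p}:X^TX=I_p\}$ (so $\mathcal V_{p,p}=O(p)$), with normalized Haar probability measure $[dX]$. $\|\cdot\|_2$ is the spectral norm, $\mathrm{etr}(A)=\exp(\mathrm{tr}A)$. For diagonal $D$ with diagonal $\boldsymbol d$, ${}_0F_1\!\left(\tfrac n2,\tfrac{D^2}{4}\right)=\int_{\mathcal V_{n,p}}\exp\big(\sum_j d_jX_{jj}\big)[dX]$. *)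

From HB Require Import structures.
From mathcomp Require Import all_boot all_order all_algebra.
From mathcomp Require Import all_classical all_reals all_analysis.
From mathcomp Require Import matrix_normedtype.
Import numFieldNormedType.Exports.
Set Implicit Arguments. Unset Strict Implicit. Unset Printing Implicit Defensive.
Import Order.TTheory GRing.Theory Num.Theory.
Local Open Scope ring_scope.
Local Open Scope classical_set_scope.

Definition stiefel (R : realType) (n p : nat) (X : 'M[R]_(n, p)) : Prop :=
  X^T *m X = 1%:M.

Definition etr (R : realType) (k : nat) (A : 'M[R]_k) : R := expR (\tr A).

Definition vnorm2 (R : realType) (k : nat) (x : 'cV[R]_k) : R :=
  Num.sqrt (\sum_(i < k) x i 0 ^+ 2).

Definition spec_norm (R : realType) (n p : nat) (A : 'M[R]_(n, p)) : R :=
  sup [set vnorm2 (A *m x) | x in [set x : 'cV[R]_p | vnorm2 x = 1]].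

(* [X] : T -> 'M_(n,p) on the probability space (T, P) has as law the
   normalized Haar probability measure [dX] on V_{n,p}: its values lie in
   V_{n,p}, its entries are measurable, and its law is invariant under left
   multiplication by any orthogonal Q in O(n) (tested against all continuous
   functions). *)
Definition haar_stiefel (R : realType) (n p : nat) (d : measure_display)
  (T : measurableType d) (P : probability T R) (X : T -> 'M[R]_(n, p)) : Prop :=
  [/\ forall t, stiefel (X t),
      forall i j, measurable_fun setT (fun t => X t i j) &
      forall Q : 'M[R]_n, Q^T *m Q = 1%:M ->
        forall f : 'M[R]_(n, p) -> R, continuous f ->
          (\int[P]_t (f (X t))%:E = \int[P]_t (f (Q *m X t))%:E)%E].

(* 0F1(n/2, D^2/4) = \int_{V_{n,p}} exp(sum_j d_j X_jj) [dX], D = diag(d) *)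
Definition hyp0F1 (R : realType) (n p : nat) (d : measure_display)
  (T : measurableType d) (P : probability T R) (X : T -> 'M[R]_(n, p))
  (dd : 'I_p -> R) : R :=
  Rintegral P setT (fun t =>
    expR (\sum_(i < n) \sum_(j < p) if (i == j :> nat) then dd j * X t i j else 0)).

From HB Require Import structures.
From mathcomp Require Import all_boot all_order all_algebra.
From mathcomp Require Import all_classical all_reals all_analysis.
From mathcomp Require Import matrix_normedtype.
Import numFieldNormedType.Exports.
Import Order.TTheory GRing.Theory Num.Theory.
Local Open Scope ring_scope.
From mathcomp Require Import lra ring.
Set Implicit Arguments. Unset Strict Implicit. Unset Printing Implicit Defensive.

(* Write [S = sum_j d_j] and [eps = eps0].  The trace of [V D M^T Psi] is
   [sum_j d_j <m_j, Psi v_j> <= ||Psi||_2 S = (1 - 2 eps) S], so it suffices to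
   show [0F1 >= K exp ((1 - eps/2) S)].  Near [pid_mx p] the diagonal entries
   are large: if [|Y - I|_F^2 < eps] then every [Y_jj > 1 - eps/2].  Integrating
   against the bump [max 0 (eps - |Y - I|_F^2)] gives the bound with
   [K = E[bump] / eps].  Finally [E[bump] > 0]: a finite grid approximates every
   point of the Stiefel manifold, Householder reflections rotate each grid cell
   onto a neighbourhood of [pid_mx p], so finitely many rotated bumps sum to at
   least [eps / 2] everywhere, and by Haar invariance each has the same mean. *)

Section SumOfSquares.
Variables (R : realType) (n : nat).
Implicit Types a b f : 'I_n -> R.

Lemma sqr_le_sum_sqr f i : f i ^+ 2 <= \sum_j f j ^+ 2.
Proof. by rewrite (bigD1 i) //= lerDl; apply: sumr_ge0 => j _; exact: sqr_ge0. Qed.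

Lemma sum_sqr1_bound f i : \sum_j f j ^+ 2 = 1 -> -1 <= f i <= 1.
Proof.
by move=> f_unit; have := sqr_le_sum_sqr f i; rewrite f_unit => ?; apply/andP; split; nra.
Qed.

Lemma dot_le_of_sqr_le a b (s : R) :
  \sum_i a i ^+ 2 = 1 -> 0 <= s -> \sum_i b i ^+ 2 <= s ^+ 2 -> \sum_i a i * b i <= s.
Proof.
move=> a_unit s_ge0 b_le; have [s_gt0|s_le0] := ltP 0 s.
  have : 0 <= \sum_i (s * a i - b i) ^+ 2 by apply: sumr_ge0 => i _; exact: sqr_ge0.
  have -> : \sum_i (s * a i - b i) ^+ 2 =
      s ^+ 2 * \sum_i a i ^+ 2 - 2 * s * \sum_i a i * b i + \sum_i b i ^+ 2.
    rewrite !mulr_sumr -sumrB -big_split /=.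
    by apply: eq_bigr => i _; ring.
  rewrite a_unit mulr1; nra.
have s0 : s = 0 by apply/eqP; rewrite eq_le s_le0.
rewrite s0 big1 // => i _; suff -> : b i = 0 by rewrite mulr0.
apply/eqP; rewrite -sqrf_eq0 eq_le sqr_ge0 andbT.
by apply: le_trans (sqr_le_sum_sqr b i) _; rewrite s0 expr0n in b_le.
Qed.

End SumOfSquares.

Section StiefelAlgebra.
Variable R : realType.

Lemma stiefel_mul n p (Q : 'M[R]_n) (Y : 'M[R]_(n, p)) :
  stiefel Q -> stiefel Y -> stiefel (Q *m Y).
Proof. by move=> hQ hY; rewrite /stiefel trmx_mul mulmxA -(mulmxA Y^T) hQ mulmx1. Qed.

Lemma stiefel_pid_mx n p : (p <= n)%N -> stiefel (pid_mx p : 'M[R]_(n, p)).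
Proof. by move=> le_pn; rewrite /stiefel tr_pid_mx pid_mx_id // pid_mx_1. Qed.

Lemma pid_mx_full n p (i : 'I_n) (j : 'I_p) :
  (pid_mx p : 'M[R]_(n, p)) i j = (i == j :> nat)%:R.
Proof. by rewrite mxE; case: eqP => //= ->; rewrite ltn_ord. Qed.

Lemma col_mulmx m n p (A : 'M[R]_(m, n)) (B : 'M[R]_(n, p)) j :
  col j (A *m B) = A *m col j B.
Proof. by rewrite !colE mulmxA. Qed.

Lemma sqr_norm_colE n (v : 'cV[R]_n) : (v^T *m v) 0 0 = \sum_l v l 0 ^+ 2.
Proof. by rewrite mxE; apply: eq_bigr => l _; rewrite mxE expr2. Qed.

Lemma dotmx_col n p (Y : 'M[R]_(n, p)) i j :
  (col i Y)^T *m col j Y = ((Y^T *m Y) i j)%:M.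
Proof.
apply/matrixP => a b; rewrite !ord1 !mxE /=.
by apply: eq_bigr => l _; rewrite !mxE.
Qed.

Lemma stiefel_dot_col n p (Y : 'M[R]_(n, p)) i j :
  stiefel Y -> (col i Y)^T *m col j Y = (i == j)%:R%:M.
Proof. by move=> hY; rewrite dotmx_col hY mxE. Qed.

Lemma stiefel_col_norm n p (Y : 'M[R]_(n, p)) j :
  stiefel Y -> \sum_i Y i j ^+ 2 = 1.
Proof.
move=> hY; have := congr1 (fun A : 'M[R]_1 => A 0 0) (stiefel_dot_col j j hY).
rewrite sqr_norm_colE mxE !eqxx /= !mulr1n => <-.
by apply: eq_bigr => i _; rewrite mxE.
Qed.

Lemma stiefel_entry_bound n p (Y : 'M[R]_(n, p)) i j :
  stiefel Y -> -1 <= Y i j <= 1.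
Proof. by move=> /(stiefel_col_norm j); exact: sum_sqr1_bound. Qed.

Definition householder n (v : 'cV[R]_n) : 'M[R]_n :=
  1%:M - (2 / (v^T *m v) 0 0) *: (v *m v^T).

Lemma trmx_householder n (v : 'cV[R]_n) : (householder v)^T = householder v.
Proof. by rewrite /householder linearB /= trmx1 linearZ /= trmx_mul trmxK. Qed.

Lemma householder_mul n (v u : 'cV[R]_n) :
  householder v *m u = u - (2 / (v^T *m v) 0 0 * (v^T *m u) 0 0) *: v.
Proof.
rewrite /householder mulmxBl mul1mx -scalemxAl -mulmxA.
by rewrite {1}[v^T *m u]mx11_scalar mul_mx_scalar scalerA.
Qed.

Lemma householder_orth n (v u : 'cV[R]_n) :
  (v^T *m u) 0 0 = 0 -> householder v *m u = u.
Proof. by move=> vu; rewrite householder_mul vu mulr0 scale0r subr0. Qed.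

Lemma stiefel_householder n (v : 'cV[R]_n) : stiefel (householder v).
Proof.
rewrite /stiefel trmx_householder /householder; set c := (v^T *m v) 0 0.
have XX : (v *m v^T) *m (v *m v^T) = c *: (v *m v^T).
  by rewrite mulmxA -(mulmxA v) [v^T *m v]mx11_scalar mul_mx_scalar scalemxAl.
have [->|c0] := eqVneq c 0; first by rewrite invr0 mulr0 scale0r subr0 mulmx1.
rewrite mulmxBl mul1mx mulmxBr mulmx1 -scalemxAl -scalemxAr XX !scalerA opprB.
have -> : 2 / c * (2 / c) * c = 2 / c + 2 / c by field.
by rewrite scalerDl addrK subrK.
Qed.

Lemma sqr_norm_col_eq0 n (v : 'cV[R]_n) : (v^T *m v) 0 0 = 0 -> v = 0.
Proof.
rewrite sqr_norm_colE => /eqP; rewrite psumr_eq0 => [/allP vP|l _]; last exact: sqr_ge0.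
apply/matrixP => i j; rewrite ord1 mxE.
by have /implyP/(_ isT) := vP i (mem_index_enum i); rewrite sqrf_eq0 => /eqP.
Qed.

Lemma householder_swap n (a b : 'cV[R]_n) :
  a^T *m a = b^T *m b -> householder (a - b) *m a = b.
Proof.
move=> ab; set v := a - b.
have [/sqr_norm_col_eq0 v0|v0] := eqVneq ((v^T *m v) 0 0) 0.
  have -> : b = a by apply/eqP; rewrite eq_sym -subr_eq0 -/v v0.
  by rewrite householder_orth // v0 trmx0 mul0mx mxE.
have ba : b^T *m a = a^T *m b.
  by rewrite -[b^T *m a]trmxK trmx_mul trmxK [a^T *m b]mx11_scalar tr_scalar_mx.
have vva : (v^T *m v) 0 0 = 2 * (v^T *m a) 0 0.
  suff -> : v^T *m v = 2 *: (v^T *m a) by rewrite mxE.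
  by rewrite /v !linearB /= !mulmxBl ba ab scaler_nat mulr2n opprB.
have va0 : (v^T *m a) 0 0 != 0.
  by move: v0; rewrite vva mulf_eq0 negb_or => /andP[].
rewrite householder_mul vva invfM mulrA divff ?pnatr_eq0 // mul1r mulVf //.
by rewrite scale1r /v opprB addrC subrK.
Qed.

Lemma stiefel_align_cols n p (W : 'M[R]_(n, p)) k : (p <= n)%N -> stiefel W ->
  (k <= p)%N -> exists Q : 'M[R]_n, stiefel Q /\
    forall j : 'I_p, (j < k)%N -> col j (Q *m W) = col j (pid_mx p).
Proof.
move=> le_pn hW; elim: k => [_|k IH lt_kp].
  by exists 1%:M; split => //; rewrite /stiefel trmx1 mulmx1.
have [Q [hQ hQW]] := IH (ltnW lt_kp).
have hA : stiefel (Q *m W) by exact: stiefel_mul.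
have hE := stiefel_pid_mx le_pn; pose kk := Ordinal lt_kp.
set a := col kk (Q *m W); set b := col kk (pid_mx p : 'M[R]_(n, p)).
have ab : a^T *m a = b^T *m b by rewrite !stiefel_dot_col.
exists (householder (a - b) *m Q); split; first exact/stiefel_mul/hQ/stiefel_householder.
move=> j; rewrite -mulmxA col_mulmx ltnS leq_eqVlt => /orP[/eqP jk|lt_jk].
  have -> : j = kk by exact: val_inj.
  exact: householder_swap.
have ne_kj : (kk == j) = false by apply/negbTE; rewrite -val_eqE /= neq_ltn lt_jk orbT.
have vj : ((a - b)^T *m col j (Q *m W)) 0 0 = 0.
  rewrite linearB /= mulmxBl {2}(hQW j lt_jk) !stiefel_dot_col //.
  by rewrite ne_kj subrr mxE.
by rewrite householder_orth // hQW.
Qed.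

Lemma stiefel_transitive n p (W : 'M[R]_(n, p)) : (p <= n)%N -> stiefel W ->
  exists Q : 'M[R]_n, stiefel Q /\ Q *m W = pid_mx p.
Proof.
move=> le_pn hW; have [Q [hQ hQW]] := stiefel_align_cols le_pn hW (leqnn p).
exists Q; split => //; apply/matrixP => i j.
by have /(congr1 (fun c : 'cV[R]_n => c i 0)) := hQW j (ltn_ord j); rewrite !mxE.
Qed.

End StiefelAlgebra.

Section Frobenius.
Variables (R : realType) (n p : nat).
Implicit Types A B Y : 'M[R]_(n, p).

Definition frob A : R := \sum_i \sum_j A i j ^+ 2.

Lemma frob_ge0 A : 0 <= frob A.
Proof. by apply: sumr_ge0 => i _; apply: sumr_ge0 => j _; exact: sqr_ge0. Qed.

Lemma frobN A : frob (- A) = frob A.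
Proof. by apply: eq_bigr => i _; apply: eq_bigr => j _; rewrite mxE sqrrN. Qed.

Lemma frobD_le A B : frob (A + B) <= 2 * frob A + 2 * frob B.
Proof.
rewrite /frob !mulr_sumr -big_split /=; apply: ler_sum => i _.
rewrite !mulr_sumr -big_split /=; apply: ler_sum => j _.
by rewrite mxE; have := sqr_ge0 (A i j - B i j); nra.
Qed.

Lemma frob_tr A : frob A = \tr (A^T *m A).
Proof.
rewrite /frob /mxtrace exchange_big; apply: eq_bigr => j _; rewrite mxE.
by apply: eq_bigr => i _; rewrite !mxE expr2.
Qed.

Lemma frob_stiefel_mull (Q : 'M[R]_n) A : stiefel Q -> frob (Q *m A) = frob A.
Proof. by move=> hQ; rewrite !frob_tr trmx_mul mulmxA -(mulmxA A^T) hQ mulmx1. Qed.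

Lemma sub_pid_mxE Y i j : (Y - pid_mx p) i j = Y i j - (i == j :> nat)%:R.
Proof. by rewrite 2!mxE pid_mx_full. Qed.

Lemma frob_sub_pid_ge Y (i : 'I_n) (j : 'I_p) : i = j :> nat -> stiefel Y ->
  2 - 2 * Y i j <= frob (Y - pid_mx p).
Proof.
move=> eq_ij hY; have hcol := stiefel_col_norm j hY; rewrite (bigD1 i) //= in hcol.
apply: (@le_trans _ _ (\sum_l ((Y - pid_mx p) l j) ^+ 2)).
  rewrite (bigD1 i) //= sub_pid_mxE -eq_ij eqxx /= mulr1n.
  rewrite (eq_bigr (fun l => Y l j ^+ 2)) => [|l ne_li]; first nra.
  by rewrite sub_pid_mxE -eq_ij val_eqE (negbTE ne_li) subr0.
rewrite /frob exchange_big (bigD1 j) //= lerDl.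
by apply: sumr_ge0 => k _; apply: sumr_ge0 => l _; exact: sqr_ge0.
Qed.

End Frobenius.

Section Grid.
Variables (R : realType) (N : nat).
Hypothesis N_gt0 : (0 < N)%N.

Definition grid_point (k : 'I_(2 * N).+1) : R := k%:R / N%:R - 1.

Lemma exists_grid_point_near (y : R) : -1 <= y <= 1 ->
  exists k, (y - grid_point k) ^+ 2 <= 1 / N%:R ^+ 2.
Proof.
move=> /andP[y_ge y_le]; have N_gt0' : 0 < N%:R :> R by rewrite ltr0n.
set x := (y + 1) * N%:R.
have x_ge0 : 0 <= x by apply: mulr_ge0; [lra|exact: ltW].
have x_lt : x < (2 * N).+1%:R.
  rewrite /x -addn1 natrD natrM.
  have : (y + 1) * N%:R <= 2 * N%:R by rewrite ler_pM2r //; lra.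
  lra.
have lt_k : (Num.truncn x < (2 * N).+1)%N by rewrite truncn_lt_nat.
exists (Ordinal lt_k); rewrite /grid_point /=.
have /andP[k_le k_gt] := truncn_itv x_ge0; set k := (Num.truncn x)%:R in k_le k_gt *.
have -> : y - (k / N%:R - 1) = (x - k) / N%:R by rewrite /x; field; rewrite gt_eqF.
rewrite expr_div_n ler_pM2r ?invr_gt0 ?exprn_gt0 //; nra.
Qed.

Definition grid_mx n p (z : 'M['I_(2 * N).+1]_(n, p)) : 'M[R]_(n, p) :=
  \matrix_(i, j) grid_point (z i j).

Lemma exists_grid_mx_near n p (Y : 'M[R]_(n, p)) : (forall i j, -1 <= Y i j <= 1) ->
  exists z, frob (Y - grid_mx z) <= (n * p)%:R / N%:R ^+ 2.
Proof.
move=> Y_bnd; have /choice[z zP] : forall ij : 'I_n * 'I_p, exists k,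
    (Y ij.1 ij.2 - grid_point k) ^+ 2 <= 1 / N%:R ^+ 2.
  by move=> ij; exact: exists_grid_point_near.
exists (\matrix_(i, j) z (i, j)).
apply: (@le_trans _ _ (\sum_(i < n) \sum_(j < p) (1 / N%:R ^+ 2 : R))).
  by apply: ler_sum => i _; apply: ler_sum => j _; rewrite !mxE; exact: (zP (i, j)).
by rewrite !sumr_const !card_ord -mulrnA -[X in X <= _]mulr_natl mulnC mul1r.
Qed.

End Grid.

Lemma continuous_sum (R : realType) (T : topologicalType) (I : Type) (s : seq I)
  (f : I -> T -> R^o) : (forall i, continuous (f i)) ->
  continuous (fun x => \sum_(i <- s) f i x).
Proof.
move=> f_cont; elim: s => [|a s IH].
  by under eq_fun do rewrite big_nil; exact: cst_continuous.
under eq_fun do rewrite big_cons.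
by move=> x; apply: continuousD; [exact: f_cont|exact: IH].
Qed.

Section Bump.
Variables (R : realType) (n p : nat).
Implicit Types (r : R) (Y : 'M[R]_(n, p)).

Definition bump r Y : R := Num.max 0 (r - frob (Y - pid_mx p)).

Lemma bump_ge0 r Y : 0 <= bump r Y.
Proof. by rewrite le_max lexx. Qed.

Lemma bump_le r Y : 0 <= r -> bump r Y <= r.
Proof. by move=> r_ge0; rewrite ge_max r_ge0 /= gerBl frob_ge0. Qed.

Lemma bumpE r : bump r = fun Y =>
  Num.max 0 (r - \sum_i \sum_j (Y i j - (i == j :> nat)%:R) ^+ 2).
Proof.
apply/funext => Y; rewrite /bump /frob.
by under eq_bigr do under eq_bigr do rewrite sub_pid_mxE.
Qed.

Lemma continuous_bump r : continuous (bump r).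
Proof.
rewrite bumpE => Y; apply: (@continuous_max _ _ (cst 0)
  (fun Y : 'M[R]_(n, p) => r - \sum_i \sum_j (Y i j - (i == j :> nat)%:R) ^+ 2)).
  exact: cst_continuous.
apply: continuousB; first exact: cst_continuous.
apply: continuous_sum => i; apply: continuous_sum => j.
under eq_fun do rewrite expr2.
have entry_cont : continuous (fun Y : 'M[R]_(n, p) => Y i j - (i == j :> nat)%:R).
  move=> Z; apply: (@continuousB _ _ _ (fun Y : 'M[R]_(n, p) => Y i j) (cst _)).
    exact: coord_continuous.
  exact: cst_continuous.
by move=> Z; apply: (@continuousM _ _ _ _ Z (entry_cont Z) (entry_cont Z)).
Qed.

Lemma measurable_bump d (T : measurableType d) (f : T -> 'M[R]_(n, p)) r :
  (forall i j, measurable_fun setT (fun t => f t i j)) ->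
  measurable_fun setT (fun t => bump r (f t)).
Proof.
move=> f_meas; rewrite bumpE.
apply: measurable_realfun.measurable_maxr; first exact: measurable_cst.
apply: measurable_realfun.measurable_funB; first exact: measurable_cst.
apply: measurable_sum => i; apply: measurable_sum => j; under eq_fun do rewrite expr2.
have entry_meas : measurable_fun setT (fun t => f t i j - (i == j :> nat)%:R).
  by apply: measurable_realfun.measurable_funB; [exact: f_meas|exact: measurable_cst].
exact: measurable_realfun.measurable_funM.
Qed.

End Bump.

Lemma measurable_mulmx_entries (R : realType) d (T : measurableType d) n m p
    (Q : 'M[R]_(m, n)) (X : T -> 'M[R]_(n, p)) :
  (forall i j, measurable_fun setT (fun t => X t i j)) ->
  forall i j, measurable_fun setT (fun t => (Q *m X t) i j).
Proof.
move=> X_meas i j; under eq_fun do rewrite mxE.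
apply: measurable_sum => k.
by apply: measurable_realfun.measurable_funM; [exact: measurable_cst|exact: X_meas].
Qed.

Section StiefelCover.
Variables (R : realType) (n p : nat).
Hypothesis le_pn : (p <= n)%N.

(* Rotate one point of the ball onto [pid_mx p]; by [frobD_le] the whole ball
   then lands within [4 b]. *)
Lemma exists_stiefel_aligning_ball (G : 'M[R]_(n, p)) (b : R) :
  exists Q : 'M[R]_n, stiefel Q /\ forall Y, stiefel Y ->
    frob (Y - G) <= b -> frob (Q *m Y - pid_mx p) <= 4 * b.
Proof.
have [[Y0 [hY0 Y0_near]]|ball0] :=
  pselect (exists Y0 : 'M[R]_(n, p), stiefel Y0 /\ frob (Y0 - G) <= b); last first.
  exists 1%:M; split; first by rewrite /stiefel trmx1 mulmx1.
  by move=> Y hY Y_near; exfalso; apply: ball0; exists Y.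
have [Q [hQ QY0]] := stiefel_transitive le_pn hY0.
exists Q; split => // Y hY Y_near.
rewrite -QY0 -mulmxBr frob_stiefel_mull //.
have -> : Y - Y0 = (Y - G) + - (Y0 - G) by rewrite opprB addrA subrK.
by apply: le_trans (frobD_le _ _) _; rewrite frobN; lra.
Qed.

Lemma exists_fine_grid (r : R) : 0 < r ->
  exists N, (0 < N)%N /\ 4 * ((n * p)%:R / N%:R ^+ 2) <= r / 2.
Proof.
move=> r_gt0; pose N := (Num.truncn (8 * (n * p)%:R / r)).+1.
exists N; split => //.
have N_ge1 : 1 <= N%:R :> R by rewrite ler1n.
have N_big : 8 * (n * p)%:R < r * N%:R.
  by rewrite [r * _]mulrC -ltr_pdivrMr //; exact: truncnS_gt.
have N_sqr : N%:R <= N%:R ^+ 2 :> R by rewrite expr2 ler_peMl //; lra.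
have N2_gt0 : 0 < N%:R ^+ 2 :> R by rewrite exprn_gt0 //; lra.
rewrite mulrA ler_pdivrMr // mulrAC ler_pdivlMr //; nra.
Qed.

Lemma stiefel_bump_cover (r : R) : 0 < r ->
  exists (I : finType) (Q : I -> 'M[R]_n), (forall z, stiefel (Q z)) /\
    forall Y : 'M[R]_(n, p), stiefel Y -> r / 2 <= \sum_z bump r (Q z *m Y).
Proof.
move=> r_gt0; have [N [N_gt0 N_fine]] := exists_fine_grid r_gt0.
set b := (n * p)%:R / N%:R ^+ 2 in N_fine.
have /choice[Q QP] := fun z : 'M['I_(2 * N).+1]_(n, p) =>
  exists_stiefel_aligning_ball (grid_mx R z) b.
exists _, Q; split => [z|Y hY]; first by case: (QP z).
have [z Y_near] := exists_grid_mx_near N_gt0 (fun i j => stiefel_entry_bound i j hY).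
rewrite (bigD1 z) //=.
have rest_ge0 : 0 <= \sum_(z' | z' != z) bump r (Q z' *m Y).
  by apply: sumr_ge0 => z' _; exact: bump_ge0.
have : r - 4 * b <= bump r (Q z *m Y).
  by rewrite /bump le_max; apply/orP; right; rewrite lerD2l lerN2; exact: (QP z).2.
lra.
Qed.

End StiefelCover.

Section ProbabilityIntegrals.
Local Open Scope ereal_scope.
Variables (R : realType) (d : measure_display) (T : measurableType d).
Variable P : probability T R.

Lemma integral_cst_prob (c : R) : \int[P]_t c%:E = c%:E.
Proof.
rewrite integral_cst //; rewrite -[RHS]mule1; congr (_ * _); exact: probability_setT.
Qed.

Lemma integral_bounded_fin_num (f : T -> R) (c : R) : measurable_fun setT f ->
  (forall t, 0 <= f t <= c)%R -> \int[P]_t (f t)%:E \is a fin_num.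
Proof.
move=> f_meas f_bnd; have f_ge0 t : (0 <= f t)%R by case/andP: (f_bnd t).
rewrite ge0_fin_numE; last by apply: integral_ge0 => t _; rewrite lee_fin.
apply: le_lt_trans (ltry c); rewrite -integral_cst_prob.
apply: ge0_le_integral => //.
- by move=> t _; rewrite lee_fin.
- exact/measurable_realfun.measurable_EFinP.
- by move=> t _; rewrite lee_fin; case/andP: (f_bnd t).
Qed.

End ProbabilityIntegrals.

Definition bump_mass (R : realType) n p d (T : measurableType d) (P : probability T R)
  (X : T -> 'M[R]_(n, p)) (r : R) : R :=
  fine (\int[P]_t (bump r (X t))%:E)%E.

Section BumpMass.
Variables (R : realType) (n p : nat) (d : measure_display) (T : measurableType d).
Variables (P : probability T R) (X : T -> 'M[R]_(n, p)).
Hypothesis hX : haar_stiefel P X.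

Lemma bump_integral_fin_num (r : R) : 0 <= r ->
  (\int[P]_t (bump r (X t))%:E)%E \is a fin_num.
Proof.
case: hX => _ X_meas _ r_ge0; apply: (integral_bounded_fin_num _ (c := r)).
  exact: measurable_bump.
by move=> t; rewrite bump_ge0 bump_le.
Qed.

Lemma bump_mass_gt0 (r : R) : (p <= n)%N -> 0 < r -> 0 < bump_mass P X r.
Proof.
move=> le_pn r_gt0; have [X_st X_meas X_inv] := hX.
have [I [Q [hQ cover]]] := stiefel_bump_cover le_pn r_gt0.
have rotate z : (\int[P]_t (bump r (Q z *m X t))%:E)%E = (bump_mass P X r)%:E.
  rewrite fineK; last exact: bump_integral_fin_num (ltW r_gt0).
  by rewrite (X_inv _ (hQ z)) //; exact: continuous_bump.
have : ((r / 2)%:E <= (#|I|%:R * bump_mass P X r)%:E)%E.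
  rewrite -(integral_cst_prob P (r / 2)).
  apply: (@le_trans _ _ (\int[P]_t (\sum_z bump r (Q z *m X t))%:E)%E).
    apply: ge0_le_integral => //.
    - by move=> t _; rewrite lee_fin; lra.
    - by apply/measurable_realfun.measurable_EFinP; apply: measurable_sum => z;
        exact/measurable_bump/measurable_mulmx_entries.
    - by move=> t _; rewrite lee_fin; exact: cover (X_st t).
  under eq_integral do rewrite -sumEFin.
  rewrite ge0_integral_sum //; last first.
  - by move=> z t _; rewrite lee_fin bump_ge0.
  - by move=> z; apply/measurable_realfun.measurable_EFinP;
      exact/measurable_bump/measurable_mulmx_entries.
  by under eq_bigr do rewrite rotate; rewrite sumEFin sumr_const mulr_natl.
rewrite lee_fin lt_neqAle => mass_pos; apply/andP; split.
  by apply: contraTneq mass_pos => <-; rewrite mulr0 -ltNge; lra.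
by apply: fine_ge0; apply: integral_ge0 => t _; rewrite lee_fin bump_ge0.
Qed.

End BumpMass.

Section SpectralNorm.
Variable R : realType.

Lemma vnorm2_ge0 k (x : 'cV[R]_k) : 0 <= vnorm2 x.
Proof. exact: sqrtr_ge0. Qed.

Lemma vnorm2_sqr k (x : 'cV[R]_k) : vnorm2 x ^+ 2 = \sum_i x i 0 ^+ 2.
Proof. by rewrite sqr_sqrtr //; apply: sumr_ge0 => i _; exact: sqr_ge0. Qed.

Lemma vnorm2_mul_le_abs_sum n p (A : 'M[R]_(n, p)) (y : 'cV[R]_p) :
  vnorm2 y = 1 -> vnorm2 (A *m y) <= \sum_i \sum_k `|A i k|.
Proof.
move=> y_unit; set B := \sum_i \sum_k `|A i k|.
have B_ge0 : 0 <= B by apply: sumr_ge0 => i _; exact: sumr_ge0.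
have y_le1 k : `|y k 0| <= 1.
  rewrite ler_norml; apply: (@sum_sqr1_bound _ _ (fun l => y l 0)).
  by rewrite -vnorm2_sqr y_unit expr1n.
have row_le i : `|(A *m y) i 0| <= \sum_k `|A i k|.
  rewrite mxE; apply: le_trans (ler_norm_sum _ _ _) _; apply: ler_sum => k _.
  by rewrite normrM -{2}(mulr1 `|A i k|); exact: ler_wpM2l.
have row_le_B i : \sum_k `|A i k| <= B.
  by rewrite /B (bigD1 i) //= lerDl; apply: sumr_ge0 => l _; exact: sumr_ge0.
rewrite -(ger0_norm B_ge0) -sqrtr_sqr; apply: ler_wsqrtr.
rewrite [B ^+ 2]expr2 {1}/B mulr_suml; apply: ler_sum => i _.
have : 0 <= \sum_k `|A i k| by apply: sumr_ge0.
by move: (row_le i) (row_le_B i); rewrite ler_norml => /andP[? ?] ? ?; nra.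
Qed.

Lemma vnorm2_mul_le_spec_norm n p (A : 'M[R]_(n, p)) (x : 'cV[R]_p) :
  vnorm2 x = 1 -> vnorm2 (A *m x) <= spec_norm A.
Proof.
move=> x_unit; apply: sup_upper_bound; last by exists x.
split; first by exists (vnorm2 (A *m x)), x.
by exists (\sum_i \sum_k `|A i k|) => _ [y y_unit <-]; exact: vnorm2_mul_le_abs_sum.
Qed.

End SpectralNorm.

Lemma vnorm2_stiefel_col (R : realType) n p (Y : 'M[R]_(n, p)) j :
  stiefel Y -> vnorm2 (col j Y) = 1.
Proof.
move=> /(stiefel_col_norm j) Y_unit; rewrite /vnorm2 -sqrtr1 -Y_unit.
by congr Num.sqrt; apply: eq_bigr => i _; rewrite mxE.
Qed.

Lemma stiefel_dot_le_spec_norm (R : realType) n p (Psi : 'M[R]_(n, p))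
    (M : 'M[R]_(n, p)) (V : 'M[R]_p) j :
  stiefel M -> stiefel V -> (M^T *m (Psi *m V)) j j <= spec_norm Psi.
Proof.
move=> hM hV; have Psi_v := vnorm2_mul_le_spec_norm Psi (vnorm2_stiefel_col j hV).
have spec_ge0 : 0 <= spec_norm Psi by exact: le_trans (vnorm2_ge0 _) Psi_v.
rewrite mxE (eq_bigr (fun i => M i j * (Psi *m col j V) i 0)) => [|i _]; last first.
  by rewrite -col_mulmx !mxE.
apply: dot_le_of_sqr_le (stiefel_col_norm j hM) spec_ge0 _.
by rewrite -vnorm2_sqr; have := vnorm2_ge0 (Psi *m col j V); nra.
Qed.

Lemma tr_le_spec_norm_sum (R : realType) n p (Psi : 'M[R]_(n, p)) (dd : 'I_p -> R)
    (M : 'M[R]_(n, p)) (V : 'M[R]_p) :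
  (forall j, 0 <= dd j) -> stiefel M -> stiefel V ->
  \tr (V *m diag_mx (\row_j dd j) *m M^T *m Psi) <= spec_norm Psi * \sum_j dd j.
Proof.
move=> dd_ge0 hM hV; rewrite -!mulmxA mxtrace_mulC -!mulmxA mul_diag_mx mulr_sumr.
apply: ler_sum => j _; rewrite 2!mxE [X in _ <= X]mulrC ler_wpM2l //.
exact: stiefel_dot_le_spec_norm.
Qed.

Section DiagSum.
Variables (R : realType) (n p : nat).
Hypothesis le_pn : (p <= n)%N.
Implicit Types (dd : 'I_p -> R) (Y : 'M[R]_(n, p)).

Definition diag_sum dd Y : R :=
  \sum_(i < n) \sum_(j < p) if (i == j :> nat) then dd j * Y i j else 0.

Lemma diag_sumE dd Y : diag_sum dd Y = \sum_j dd j * Y (widen_ord le_pn j) j.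
Proof.
rewrite /diag_sum exchange_big; apply: eq_bigr => j _.
rewrite (bigD1 (widen_ord le_pn j)) //= eqxx big1 ?addr0 // => i ne_ij.
by rewrite ifF //; apply: contraNF ne_ij => /eqP eq_ij; apply/eqP/val_inj.
Qed.

Lemma diag_sum_le dd Y : (forall j, 0 <= dd j) -> stiefel Y -> diag_sum dd Y <= \sum_j dd j.
Proof.
move=> dd_ge0 hY; rewrite diag_sumE; apply: ler_sum => j _.
rewrite -{2}(mulr1 (dd j)) ler_wpM2l //.
by case/andP: (stiefel_entry_bound (widen_ord le_pn j) j hY).
Qed.

Lemma bump_le_expR_diag_sum dd Y (r : R) :
  (forall j, 0 <= dd j) -> stiefel Y -> 0 < r ->
  bump r Y / r * expR ((1 - r / 2) * \sum_j dd j) <= expR (diag_sum dd Y).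
Proof.
move=> dd_ge0 hY r_gt0; have [bump0|bump_gt0] := lerP (bump r Y) 0.
  apply: le_trans (ltW (expR_gt0 _)).
  by rewrite pmulr_lle0 ?expR_gt0 // pmulr_lle0 // invr_gt0.
have near_pid : frob (Y - pid_mx p) < r.
  by move: bump_gt0; rewrite /bump lt_max ltxx /=; lra.
apply: (@le_trans _ _ (expR ((1 - r / 2) * \sum_j dd j))).
  rewrite ler_piMl ?expR_ge0 // ler_pdivrMr // mul1r; exact: bump_le (ltW r_gt0).
rewrite ler_expR diag_sumE mulr_sumr; apply: ler_sum => j _.
rewrite mulrC ler_wpM2l //.
by have := @frob_sub_pid_ge _ _ _ Y (widen_ord le_pn j) j erefl hY; lra.
Qed.

Lemma measurable_expR_diag_sum d (T : measurableType d) (X : T -> 'M[R]_(n, p)) dd :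
  (forall i j, measurable_fun setT (fun t => X t i j)) ->
  measurable_fun setT (fun t => expR (diag_sum dd (X t))).
Proof.
move=> X_meas; apply: measurableT_comp; first exact: measurable_realfun.measurable_expR.
apply: measurable_sum => i; apply: measurable_sum => j.
case: (i == j :> nat); last exact: measurable_cst.
by apply: measurable_realfun.measurable_funM; [exact: measurable_cst|exact: X_meas].
Qed.

End DiagSum.

Lemma hyp0F1_ge_bump_mass (R : realType) n p d (T : measurableType d)
    (P : probability T R) (X : T -> 'M[R]_(n, p)) (dd : 'I_p -> R) (r : R) :
  haar_stiefel P X -> (p <= n)%N -> (forall j, 0 <= dd j) -> 0 < r ->
  bump_mass P X r / r * expR ((1 - r / 2) * \sum_j dd j) <= hyp0F1 P X dd.
Proof.
move=> hX le_pn dd_ge0 r_gt0; have [X_st X_meas _] := hX.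
set c := expR ((1 - r / 2) * \sum_j dd j) / r.
have c_ge0 : 0 <= c by rewrite divr_ge0 ?expR_ge0 // ltW.
have I_fin := bump_integral_fin_num hX (ltW r_gt0).
have J_fin : (\int[P]_t (expR (diag_sum dd (X t)))%:E)%E \is a fin_num.
  apply: (integral_bounded_fin_num _ (c := expR (\sum_j dd j))).
    exact: measurable_expR_diag_sum.
  by move=> t; rewrite expR_ge0 ler_expR; exact: diag_sum_le (X_st t).
have -> : bump_mass P X r / r * expR ((1 - r / 2) * \sum_j dd j) =
    fine (c%:E * \int[P]_t (bump r (X t))%:E)%E.
  by rewrite fineM //= /bump_mass /c; ring.
apply: fine_le => //; first by rewrite fin_numM.
rewrite -ge0_integralZl_EFin //; last 2 first.
- by move=> t _; rewrite lee_fin bump_ge0.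
- exact/measurable_realfun.measurable_EFinP/measurable_bump.
apply: ge0_le_integral => //.
- by move=> t _; rewrite -EFinM lee_fin mulr_ge0 ?bump_ge0.
- apply/measurable_realfun.measurable_EFinP.
  exact/measurable_realfun.measurable_funM/measurable_bump.
- exact/measurable_realfun.measurable_EFinP/measurable_expR_diag_sum.
move=> t _; rewrite -EFinM lee_fin mulrC /c mulrA mulrAC.
exact: bump_le_expR_diag_sum dd_ge0 (X_st t) r_gt0.
Qed.

Theorem lemma6 (R : realType) (n p : nat) (hp : (0 < p)%N) (hnp : (p <= n)%N)
  (d : measure_display) (T : measurableType d) (P : probability T R)
  (X : T -> 'M[R]_(n, p)) (hX : haar_stiefel P X) :
  exists K : R -> R,
    forall Psi : 'M[R]_(n, p), spec_norm Psi < 1 ->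
      let eps0 := (1 - spec_norm Psi) / 2 in
      0 < K eps0 /\
      forall (dd : 'I_p -> R), (forall j, 0 < dd j) ->
      forall (M : 'M[R]_(n, p)) (V : 'M[R]_p), stiefel M -> stiefel V ->
        etr (V *m diag_mx (\row_j dd j) *m M^T *m Psi) / hyp0F1 P X dd
        < expR (- eps0 * \sum_(j < p) dd j) / K eps0.
Proof.
exists (fun r => bump_mass P X r / r) => Psi Psi_lt1 eps0.
have eps0_gt0 : 0 < eps0 by rewrite /eps0; lra.
set K := bump_mass P X eps0 / eps0.
have K_gt0 : 0 < K by rewrite divr_gt0 // bump_mass_gt0.
split => // dd dd_gt0 M V hM hV; have dd_ge0 j : 0 <= dd j := ltW (dd_gt0 j).
set S := \sum_j dd j.
have S_gt0 : 0 < S.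
  apply: lt_le_trans (dd_gt0 (Ordinal hp)) _.
  by rewrite /S (bigD1 (Ordinal hp)) //= lerDl sumr_ge0.
have F_ge := hyp0F1_ge_bump_mass hX hnp dd_ge0 eps0_gt0; rewrite -/K -/S in F_ge.
have etr_le : etr (V *m diag_mx (\row_j dd j) *m M^T *m Psi) <= expR (spec_norm Psi * S).
  by rewrite ler_expR; exact: tr_le_spec_norm_sum.
have spec_S : spec_norm Psi * S = - eps0 * S + (1 - eps0) * S by rewrite /eps0; field.
have gap : expR ((1 - eps0) * S) < expR ((1 - eps0 / 2) * S).
  by rewrite ltr_expR ltr_pM2r //; lra.
have F_gt0 : 0 < hyp0F1 P X dd.
  by apply: lt_le_trans F_ge; rewrite mulr_gt0 ?expR_gt0.
rewrite ltr_pdivrMr // mulrAC ltr_pdivlMr //.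
apply: le_lt_trans (ler_wpM2r (ltW K_gt0) etr_le) _.
rewrite spec_S expRD -mulrA ltr_pM2l ?expR_gt0 //.
by apply: lt_le_trans F_ge; rewrite mulrC ltr_pM2l.
Qed.
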